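(* Let $a\in(0,\frac23]$ and $f\in U_+$. For $x\in\mathbb R$ let $X^x_0=x$, $X^x_{n+1}=aX^x_n+\xi_{n+1}$, all driven by the same sequence $(\xi_n)$, and $\tau_x=\inf\{n\ge0:X^x_n<0\}$. Then for any $x,y\in[0,\frac1{1-a}]$ with $f(x)=f(y)$ we have $\tau_x=\tau_y$ and \[ f(X^x_{n\wedge\tau_x})=f(X^y_{n\wedge\tau_y})\quad\text{for all } n\ge1. \]
   Context: Let $p\in(0,1)$, $q=1-p$, and let $\xi_1,\xi_2,\dots$ be i.i.d. with $\mathbb P(\xi_1=1)=p$, $\mathbb P(\xi_1=-1)=q$. For $a\in(0,1)$ define $T_a$ by $T_a(x)=\frac1a(x+1)$ if $0\le x<1$ and $x\le\frac{2a-1}{1-a}$, and $T_a(x)=\frac1a(x-1)$ if $1\le x\le\frac1{1-a}$. Let $I_a=\big(\frac{2a-1}{1-a},1\big)$ and $\varkappa_a=\inf\{k\ge0:T_a^k(0)\in I_a\}$ ($\inf\emptyset=\infty$); the points $T_a^k(0)$ are defined for $0\le k\le\varkappa_a$. Let $U_+$ be the set of functions $f:\mathbb R\to\mathbb R$ of the form $f(x)=\sum_{k=0}^{\varkappa_a}u_k\mathbb 1\{x\ge T_a^k(0)\}$ with all $u_k>0$ and $\sum_k u_k<\infty$. *)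

From Stdlib Require Import Reals Lra.
From Coquelicot Require Import Coquelicot.
Open Scope R_scope.

(* The map T_a, made total: outside its domain of definition it returns x
   (junk); this never matters for the points T_a^k(0), k <= kappa_a. *)
Definition Ta (a x : R) : R :=
  if Rle_dec 0 x then
    if Rlt_dec x 1 then
      if Rle_dec x ((2*a - 1) / (1 - a)) then (x + 1) / a else x
    else if Rle_dec x (1 / (1 - a)) then (x - 1) / a else x
  else x.

Definition orb (a : R) (k : nat) : R := Nat.iter k (Ta a) 0.

Definition inIa (a x : R) : bool :=
  if Rlt_dec ((2*a - 1) / (1 - a)) x then
    if Rlt_dec x 1 then true else false
  else false.

(* alive a k  <->  k <= kappa_a  (no T_a^j(0) with j < k lies in I_a) *)
Fixpoint alive (a : R) (k : nat) : bool :=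
  match k with
  | O => true
  | S j => alive a j && negb (inIa a (orb a j))
  end.

Definition U_plus (a : R) (f : R -> R) : Prop :=
  exists u : nat -> R,
    (forall k, 0 < u k) /\
    ex_series (fun k => if alive a k then u k else 0) /\
    forall x, is_series
      (fun k => if alive a k then u k * (if Rle_dec (orb a k) x then 1 else 0) else 0)
      (f x).

Fixpoint Xp (a : R) (xi : nat -> R) (x : R) (n : nat) : R :=
  match n with
  | O => x
  | S m => a * Xp a xi x m + xi (S m)
  end.

(* t is tau = inf{n >= 0 : X_n < 0} (None = +oo) *)
Definition is_hitting_time (X : nat -> R) (t : option nat) : Prop :=
  match t with
  | Some n => X n < 0 /\ (forall m, (m < n)%nat -> 0 <= X m)
  | None => forall m, 0 <= X m
  end.

Definition stopped (n : nat) (t : option nat) : nat :=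
  match t with
  | Some k => Nat.min n k
  | None => n
  end.

From Stdlib Require Import Reals Lra Lia.
From Coquelicot Require Import Coquelicot.
Open Scope R_scope.

(* The orbit points T_a^k(0), k <= kappa_a, cut [0, 1/(1-a)] into cells, and as
   every u_k is positive, f(x) = f(y) holds exactly when no cut point separates x
   from y.  One step x |-> a x + 1 can only move x across a cut z >= 1, and then
   z <= a x + 1 iff T_a z = (z - 1)/a <= x; a step x |-> a x - 1 can only cross a
   cut z <= (2a-1)/(1-a), and then z <= a x - 1 iff T_a z = (z + 1)/a <= x.  In
   both cases z lies outside I_a, so T_a z is again a cut point and the two walks
   stay in a common cell.  As 0 is a cut point, they become negative together. *)

Lemma sum_n_ge_term (D : nat -> R) :
  (forall n, 0 <= D n) -> forall k n, (k <= n)%nat -> D k <= sum_n D n.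
Proof.
  intros HD k n; revert k; induction n as [|n IH]; intros k Hkn.
  - replace k with 0%nat by lia; rewrite sum_O; lra.
  - rewrite sum_Sn; unfold plus; simpl.
    destruct (Nat.eq_dec k (S n)) as [->|Hk].
    + assert (D 0%nat <= sum_n D n) by (apply IH; lia).
      specialize (HD 0%nat); lra.
    + assert (D k <= sum_n D n) by (apply IH; lia).
      specialize (HD (S n)); lra.
Qed.

Lemma is_series_ge_term (D : nat -> R) (L : R) (k : nat) :
  (forall n, 0 <= D n) -> is_series D L -> D k <= L.
Proof.
  intros HD HS.
  apply Rle_trans with (sum_n D k); [now apply sum_n_ge_term|].
  apply is_lim_seq_incr_compare; [exact HS|].
  intros n; rewrite sum_Sn; unfold plus; simpl; specialize (HD (S n)); lra.
Qed.

Lemma is_series_lt (A B : nat -> R) (SA SB : R) (k : nat) :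
  (forall n, A n <= B n) -> A k < B k ->
  is_series A SA -> is_series B SB -> SA < SB.
Proof.
  intros Hle Hk HA HB.
  assert (HD := is_series_minus _ _ _ _ HB HA).
  unfold plus, opp in HD; simpl in HD.
  assert (B k + - A k <= SB + - SA); [|lra].
  apply (is_series_ge_term (fun n => B n + - A n)); [|exact HD].
  intros n; specialize (Hle n); lra.
Qed.

Lemma Ta_cases (a x : R) :
  Ta a x = x \/ Ta a x = (x + 1) / a \/ Ta a x = (x - 1) / a.
Proof.
  unfold Ta; repeat destruct Rle_dec; repeat destruct Rlt_dec; auto.
Qed.

Definition odd_over_even (x : R) : Prop :=
  exists q d : Z, (0 < d)%Z /\ x = IZR (2 * q + 1) / IZR (2 * d).

Lemma odd_over_even_neq_1 (x : R) : odd_over_even x -> x <> 1.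
Proof.
  intros [q [d [Hd ->]]] E.
  assert (Hd2 : IZR (2 * d) <> 0) by (apply not_0_IZR; lia).
  assert (IZR (2 * q + 1) = IZR (2 * d)) as Hqd%eq_IZR; [|lia].
  apply (Rmult_eq_reg_r (/ IZR (2 * d))); [|now apply Rinv_neq_0_compat].
  rewrite Rinv_r by exact Hd2; exact E.
Qed.

Lemma odd_over_even_shift (s : Z) (x : R) :
  odd_over_even x -> odd_over_even ((x + IZR s) / (2 / 3)).
Proof.
  intros [q [d [Hd ->]]].
  exists (3 * q + 1 + 3 * d * s)%Z, (2 * d)%Z; split; [lia|].
  assert (Hd0 : IZR d <> 0) by (apply not_0_IZR; lia).
  repeat rewrite ?mult_IZR, ?plus_IZR; field; exact Hd0.
Qed.

Lemma orb_two_thirds_S_odd_over_even (k : nat) : odd_over_even (orb (2 / 3) (S k)).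
Proof.
  induction k as [|k IH].
  - exists 1%Z, 1%Z; split; [lia|].
    unfold orb, Ta; simpl.
    repeat destruct Rle_dec; repeat destruct Rlt_dec; try lra; field.
  - change (orb (2 / 3) (S (S k))) with (Ta (2 / 3) (orb (2 / 3) (S k))).
    destruct (Ta_cases (2 / 3) (orb (2 / 3) (S k))) as [-> | [-> | ->]].
    + exact IH.
    + exact (odd_over_even_shift 1 _ IH).
    + replace (orb (2 / 3) (S k) - 1) with (orb (2 / 3) (S k) + IZR (-1)) by lra.
      exact (odd_over_even_shift (-1) _ IH).
Qed.

Lemma orb_two_thirds_neq_1 (k : nat) : orb (2 / 3) k <> 1.
Proof.
  destruct k as [|k].
  - unfold orb; simpl; lra.
  - apply odd_over_even_neq_1, orb_two_thirds_S_odd_over_even.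
Qed.

Definition same_cell (a x y : R) : Prop :=
  forall k, alive a k = true -> (orb a k <= x <-> orb a k <= y).

Lemma same_cell_nonneg (a x y : R) : same_cell a x y -> (0 <= x <-> 0 <= y).
Proof. intros H; exact (H 0%nat eq_refl). Qed.

Lemma U_plus_lt (a : R) (f : R -> R) (k : nat) (x y : R) :
  U_plus a f -> alive a k = true -> y < orb a k <= x -> f y < f x.
Proof.
  intros [u [Hu [_ Hf]]] Hk Hyx.
  refine (is_series_lt _ _ _ _ k _ _ (Hf y) (Hf x)).
  - intros n; destruct (alive a n); [|lra].
    specialize (Hu n); destruct Rle_dec, Rle_dec; lra.
  - rewrite Hk; specialize (Hu k); destruct Rle_dec, Rle_dec; lra.
Qed.

Lemma same_cell_of_U_plus_eq (a : R) (f : R -> R) (x y : R) :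
  U_plus a f -> f x = f y -> same_cell a x y.
Proof.
  intros Hf Hxy k Hk; split; intros Hz; apply Rnot_lt_le; intros Hlt.
  - pose proof (U_plus_lt a f k x y Hf Hk (conj Hlt Hz)); lra.
  - pose proof (U_plus_lt a f k y x Hf Hk (conj Hlt Hz)); lra.
Qed.

Lemma U_plus_eq_of_same_cell (a : R) (f : R -> R) (x y : R) :
  U_plus a f -> same_cell a x y -> f x = f y.
Proof.
  intros [u [_ [_ Hf]]] Hxy.
  rewrite <- (is_series_unique _ _ (Hf x)), <- (is_series_unique _ _ (Hf y)).
  apply Series_ext; intros n.
  destruct (alive a n) eqn:Hn; [|reflexivity].
  specialize (Hxy n Hn); destruct Rle_dec, Rle_dec; tauto.
Qed.

Section Cells.

Variable a : R.
Hypothesis Ha : 0 < a < 1.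

Local Notation M := (1 / (1 - a)).
Local Notation c := ((2 * a - 1) / (1 - a)).

Lemma M_fixed : a * M + 1 = M.
Proof. field; lra. Qed.

Lemma c_eq : c = a * M - 1.
Proof. field; lra. Qed.

Lemma Ta_above_1 (z : R) : 1 <= z <= M -> Ta a z = (z - 1) / a.
Proof.
  intros Hz; unfold Ta.
  repeat destruct Rle_dec; repeat destruct Rlt_dec; solve [reflexivity | lra].
Qed.

Lemma Ta_below_c (z : R) : 0 <= z < 1 -> z <= c -> Ta a z = (z + 1) / a.
Proof.
  intros Hz Hzc; unfold Ta.
  repeat destruct Rle_dec; repeat destruct Rlt_dec; solve [reflexivity | lra].
Qed.

Lemma Ta_bounds (z : R) : 0 <= z <= M -> 0 <= Ta a z <= M.
Proof.
  intros Hz; pose proof M_fixed; pose proof c_eq.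
  destruct (Rlt_or_le z 1) as [Hz1|Hz1].
  - destruct (Rle_or_lt z c) as [Hzc|Hzc].
    + rewrite Ta_below_c by lra.
      split; [apply Rle_div_r | apply Rle_div_l]; lra.
    + unfold Ta; repeat destruct Rle_dec; repeat destruct Rlt_dec; lra.
  - rewrite Ta_above_1 by lra.
    split; [apply Rle_div_r | apply Rle_div_l]; nra.
Qed.

Lemma orb_bounds (k : nat) : 0 <= orb a k <= M.
Proof.
  induction k as [|k IH].
  - unfold orb; simpl; split; [lra | apply Rle_div_r; lra].
  - exact (Ta_bounds _ IH).
Qed.

Lemma alive_S (k : nat) :
  alive a k = true -> ~ (c < orb a k < 1) -> alive a (S k) = true.
Proof.
  intros Hk Hz; cbn [alive]; rewrite Hk; unfold inIa.
  destruct (Rlt_dec c (orb a k)), (Rlt_dec (orb a k) 1); tauto.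
Qed.

Hypothesis Ha23 : a <= 2 / 3.

(* (2a-1)/(1-a) < 1 for a < 2/3; at a = 2/3 it equals 1, which the orbit avoids. *)
Lemma orb_le_c_lt_1 (k : nat) : orb a k <= c -> orb a k < 1.
Proof.
  intros Hk.
  destruct (Rle_lt_or_eq_dec a (2 / 3) Ha23) as [Hlt | ->].
  - apply Rle_lt_trans with c; [exact Hk|].
    apply Rlt_div_l; lra.
  - replace ((2 * (2 / 3) - 1) / (1 - 2 / 3)) with 1 in Hk by field.
    pose proof (orb_two_thirds_neq_1 k); lra.
Qed.

Lemma same_cell_shift_up (x y : R) :
  0 <= x -> 0 <= y -> same_cell a x y -> same_cell a (a * x + 1) (a * y + 1).
Proof.
  intros Hx Hy Hxy k Hk; pose proof (orb_bounds k) as Hbd.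
  destruct (Rlt_or_le (orb a k) 1) as [Hz|Hz].
  - split; intros; nra.
  - assert (HS : orb a (S k) = (orb a k - 1) / a) by (apply Ta_above_1; lra).
    assert (Hpull : forall w, orb a k <= a * w + 1 <-> orb a (S k) <= w).
    { intros w; rewrite HS, Rle_div_l by lra; split; intros; lra. }
    rewrite !Hpull; apply Hxy, alive_S; [exact Hk | lra].
Qed.

Lemma same_cell_shift_down (x y : R) :
  x <= M -> y <= M -> same_cell a x y -> same_cell a (a * x - 1) (a * y - 1).
Proof.
  intros Hx Hy Hxy k Hk; pose proof (orb_bounds k) as Hbd; pose proof c_eq.
  destruct (Rle_or_lt (orb a k) c) as [Hz|Hz].
  - pose proof (orb_le_c_lt_1 k Hz).
    assert (HS : orb a (S k) = (orb a k + 1) / a) by (apply Ta_below_c; lra).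
    assert (Hpull : forall w, orb a k <= a * w - 1 <-> orb a (S k) <= w).
    { intros w; rewrite HS, Rle_div_l by lra; split; intros; lra. }
    rewrite !Hpull; apply Hxy, alive_S; [exact Hk | lra].
  - split; intros; nra.
Qed.

Lemma same_cell_step (x y e : R) :
  0 <= x <= M -> 0 <= y <= M -> e = 1 \/ e = -1 ->
  same_cell a x y -> same_cell a (a * x + e) (a * y + e).
Proof.
  intros Hx Hy [-> | ->] Hxy.
  - now apply same_cell_shift_up.
  - rewrite <- !(Rminus_def _ 1).
    now apply same_cell_shift_down.
Qed.

End Cells.

Section Trajectories.

Variables (a : R) (xi : nat -> R).
Hypothesis Ha : 0 < a <= 2 / 3.
Hypothesis Hxi : forall n, (1 <= n)%nat -> xi n = 1 \/ xi n = -1.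

Local Notation M := (1 / (1 - a)).

Lemma Xp_le_M (x : R) (n : nat) : x <= M -> Xp a xi x n <= M.
Proof.
  intros Hx; induction n as [|n IH]; [exact Hx|].
  pose proof (M_fixed a ltac:(lra)).
  assert (xi (S n) <= 1) by (destruct (Hxi (S n) ltac:(lia)); lra).
  simpl; nra.
Qed.

Lemma same_cell_Xp (x y : R) (n : nat) :
  x <= M -> y <= M -> same_cell a x y ->
  (forall m, (m < n)%nat -> 0 <= Xp a xi x m /\ 0 <= Xp a xi y m) ->
  same_cell a (Xp a xi x n) (Xp a xi y n).
Proof.
  intros Hx Hy Hxy; induction n as [|n IH]; intros Hpos; [exact Hxy|].
  destruct (Hpos n) as [Hxn Hyn]; [lia|].
  apply same_cell_step; try lra.
  - split; [exact Hxn | now apply Xp_le_M].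
  - split; [exact Hyn | now apply Xp_le_M].
  - apply Hxi; lia.
  - apply IH; intros m Hm; apply Hpos; lia.
Qed.

End Trajectories.

Lemma is_hitting_time_nonneg (X : nat -> R) (t : option nat) (n m : nat) :
  is_hitting_time X t -> (m < stopped n t)%nat -> 0 <= X m.
Proof.
  destruct t as [k|]; simpl; intros HX Hm; [apply HX; lia | apply HX].
Qed.

Definition signs_agree (X Y : nat -> R) : Prop :=
  forall m, (forall j, (j < m)%nat -> 0 <= X j /\ 0 <= Y j) ->
    (0 <= X m <-> 0 <= Y m).

Lemma signs_agree_sym (X Y : nat -> R) : signs_agree X Y -> signs_agree Y X.
Proof.
  intros Hsign m Hm; symmetry; apply Hsign; intros j Hj; apply and_comm, Hm, Hj.
Qed.

Lemma is_hitting_time_not_before (X Y : nat -> R) (n : nat) :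
  signs_agree X Y ->
  is_hitting_time X (Some n) -> ~ (forall m, (m <= n)%nat -> 0 <= Y m).
Proof.
  intros Hsign [Hn Hbefore] HY.
  assert (0 <= X n); [|lra].
  apply Hsign; [|apply HY; lia].
  intros j Hj; split; [apply Hbefore | apply HY]; lia.
Qed.

Lemma is_hitting_time_eq (X Y : nat -> R) (tx ty : option nat) :
  signs_agree X Y -> is_hitting_time X tx -> is_hitting_time Y ty -> tx = ty.
Proof.
  intros Hsign HX HY; pose proof (signs_agree_sym X Y Hsign) as Hsign'.
  destruct tx as [n|], ty as [m|]; simpl in HX, HY; try reflexivity.
  - destruct (Nat.lt_total n m) as [Hnm | [-> | Hmn]]; [exfalso | reflexivity | exfalso].
    + apply (is_hitting_time_not_before X Y n Hsign HX); intros j Hj; apply HY; lia.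
    + apply (is_hitting_time_not_before Y X m Hsign' HY); intros j Hj; apply HX; lia.
  - exfalso; apply (is_hitting_time_not_before X Y n Hsign HX); intros j _; apply HY.
  - exfalso; apply (is_hitting_time_not_before Y X m Hsign' HY); intros j _; apply HX.
Qed.

Theorem proposition2p3 (a : R) (f : R -> R) (xi : nat -> R) (x y : R)
  (tx ty : option nat) :
  0 < a -> a <= 2/3 ->
  U_plus a f ->
  (forall n, (1 <= n)%nat -> xi n = 1 \/ xi n = -1) ->
  0 <= x -> x <= 1 / (1 - a) ->
  0 <= y -> y <= 1 / (1 - a) ->
  f x = f y ->
  is_hitting_time (Xp a xi x) tx ->
  is_hitting_time (Xp a xi y) ty ->
  tx = ty /\
  (forall n, (1 <= n)%nat ->
     f (Xp a xi x (stopped n tx)) = f (Xp a xi y (stopped n ty))).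
Proof.
  intros Ha0 Ha1 Hf Hxi _ Hx _ Hy Hfxy Htx Hty.
  assert (Hcell := same_cell_of_U_plus_eq a f x y Hf Hfxy).
  assert (Hcell_Xp := fun n => same_cell_Xp a xi (conj Ha0 Ha1) Hxi x y n Hx Hy Hcell).
  assert (Hsign : signs_agree (Xp a xi x) (Xp a xi y)).
  { intros n Hn; exact (same_cell_nonneg _ _ _ (Hcell_Xp n Hn)). }
  assert (tx = ty) as <- by exact (is_hitting_time_eq _ _ _ _ Hsign Htx Hty).
  split; [reflexivity|].
  intros n _; apply (U_plus_eq_of_same_cell a f _ _ Hf), Hcell_Xp.
  intros m Hm; split; eapply is_hitting_time_nonneg; eassumption.
Qed.
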